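(* Let $\Gamma=(V,E,\psi)$ be a multigraph without loops. Then $\Gamma$ is a $G$-graph (i.e. $\Gamma\cong\Phi(G,S)$ for some group $G$ and multiset $S$ of elements of $G$) if and only if there exist a subgroup $H$ of $Aut(\Gamma)$ and a clique $C\subseteq V$ such that: (1) each orbit of the action of $H$ on $V$ is a stable set; (2) $C$ intersects every orbit of the action of $H$ on $V$; (3) for every $u\in C$, $Stab_H u$ is cyclic; (4) for every $u\in C$ and every orbit $O$ of $H$ with $u\notin O$, $Stab_H u$ acts regularly on the set of edges incident to $u$ whose other end-point lies in $O$.
   Context: A multigraph is a triple $(V,E,\psi)$ where $\psi$ assigns to each edge an unordered pair of vertices; parallel edges allowed. Automorphisms are pairs $(f,f^\#)$ of bijections of vertices and edges compatible with $\psi$, so $Aut(\Gamma)$ acts on $V$ and $E$. A clique is a set of pairwise adjacent vertices; a stable set is a set of pairwise non-adjacent vertices. An action is regular on $X$ if for all $x,y\in X$ exactly one group element sends $x$ to $y$. For a group $G$ and a multiset $S$ of elements of $G$, $\Phi(G,S)$ is the multigraph whose vertex set is the union over the members $s$ of $S$ (with multiplicity, a repeated element giving a separate copy of its cosets per occurrence) of $V_s=\{\langle s\rangle x: x\in G\}$ (right cosets), with, for $\langle s\rangle x\in V_s$, $\langle t\rangle y\in V_t$, $s,t$ distinct members of $S$, one edge labeled $g$ between them for each $g\in\langle s\rangle x\cap\langle t\rangle y$, and no other edges. A $G$-graph is a multigraph isomorphic (ignoring labels) to some $\Phi(G,S)$. *)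

From HB Require Import structures.
From mathcomp Require Import all_boot all_fingroup.
From mathcomp Require Import gproduct cyclic.
Set Implicit Arguments. Unset Strict Implicit. Unset Printing Implicit Defensive.

Local Open Scope group_scope.

(* A finite multigraph is given by finite types V (vertices), E (edges) and
   psi : E -> {set V}, psi e being the (unordered) set of end-points of e.
   Well-formedness: 1 <= #|psi e| <= 2; loopless: #|psi e| = 2%N. *)
Definition loopless (V E : finType) (psi : E -> {set V}) : Prop :=
  forall e, #|psi e| = 2%N.

Definition adjacent (V E : finType) (psi : E -> {set V}) (x y : V) : bool :=
  (x != y) && [exists e, (x \in psi e) && (y \in psi e)].

Definition is_clique (V E : finType) (psi : E -> {set V}) (A : {set V}) : Prop :=
  forall x y, x \in A -> y \in A -> x != y -> adjacent psi x y.

Definition is_stable (V E : finType) (psi : E -> {set V}) (A : {set V}) : Prop :=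
  forall x y, x \in A -> y \in A -> ~~ adjacent psi x y.

Definition Aut_mg (V E : finType) (psi : E -> {set V})
  : {set {perm V} * {perm E}} :=
  [set h : {perm V} * {perm E} | [forall e, psi (h.2 e) == h.1 @: psi e]].

Definition vorbit (V E : finType) (H : {set {perm V} * {perm E}}) (v : V)
  : {set V} := [set (h : {perm V} * {perm E}).1 v | h in H].

Definition vstab (V E : finType) (H : {set {perm V} * {perm E}}) (u : V)
  : {set {perm V} * {perm E}} := [set h in H | (h : {perm V} * {perm E}).1 u == u].

Definition acts_regularly_E (V E : finType) (K : {set {perm V} * {perm E}})
  (X : {set E}) : Prop :=
  forall x y, x \in X -> y \in X -> #|[set h in K | (h : {perm V} * {perm E}).2 x == y]| = 1%N.

Definition edges_to (V E : finType) (psi : E -> {set V}) (u : V) (O : {set V})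
  : {set E} :=
  [set e | (u \in psi e) && [exists w, (w \in O) && (w != u) && (w \in psi e)]].

(* Multigraph isomorphism of (V,E,psi) onto the "set-presented" multigraph
   with vertex set VS, edge set ES and end-point map psi' (defined on the
   ambient types V' E'). *)
Definition iso_onto (V E V' E' : finType) (psi : E -> {set V})
  (VS : {set V'}) (ES : {set E'}) (psi' : E' -> {set V'}) : Prop :=
  exists (f : V -> V') (g : E -> E'),
    [/\ injective f, f @: [set: V] = VS, injective g, g @: [set: E] = ES &
        forall e, psi' (g e) = f @: psi e].

Section Phi.
Variables (gT : finGroupType) (S : seq gT).

(* vertices of Phi(G,S): pairs (i, <s_i> x), the i-th member of S with a
   right coset of <s_i>; distinct occurrences give separate copies *)
Definition Phi_V : {set 'I_(size S) * {set gT}} :=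
  [set v : 'I_(size S) * {set gT} | v.2 \in rcosets <[nth 1 S v.1]> [set: gT]].

Definition Phi_E : {set 'I_(size S) * 'I_(size S) * gT} :=
  [set e : 'I_(size S) * 'I_(size S) * gT | (e.1.1 < e.1.2)%N].

Definition Phi_psi (e : 'I_(size S) * 'I_(size S) * gT)
  : {set 'I_(size S) * {set gT}} :=
  [set (e.1.1, <[nth 1 S e.1.1]> :* e.2); (e.1.2, <[nth 1 S e.1.2]> :* e.2)].
End Phi.

Definition is_G_graph (V E : finType) (psi : E -> {set V}) : Prop :=
  exists (gT : finGroupType) (S : seq gT),
    iso_onto psi (Phi_V S) (Phi_E S) (@Phi_psi gT S).

(* Right multiplication by G acts on Phi(G, S), on cosets and on edge labels
   alike, by automorphisms.  Its vertex orbits are the parts V_s, which are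
   stable; the subgroups <s> themselves form a clique meeting every part; the
   stabiliser of <s> is the image of <s>, and the edges from <s> to another
   part have their labels in <s>, on which <s> acts regularly.
   Conversely, take G = H, let c_i be the vertex of C in the i-th orbit and s_i
   a generator of the cyclic group Stab_H(c_i).  A vertex v of that orbit
   becomes the set of k in H with k c_i = v, a right coset of <s_i>
   (permutations compose left to right).  For i < j fix an edge e_ij between
   c_i and c_j; regularity of Stab_H(c_i) on the edges from c_i to the orbit of
   c_j makes every edge between the two orbits k e_ij for exactly one k in H,
   and it becomes the edge of Phi(H, S) labelled k. *)

From HB Require Import structures.
From mathcomp Require Import all_boot all_fingroup.
From mathcomp Require Import gproduct cyclic zify.
Set Implicit Arguments. Unset Strict Implicit. Unset Printing Implicit Defensive.

Local Open Scope group_scope.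

Section Multigraphs.
Variables (V E : finType) (psi : E -> {set V}).

Lemma Aut_mg_psi h e : h \in Aut_mg psi -> psi (h.2 e) = h.1 @: psi e.
Proof. by rewrite inE => /forallP/(_ e)/eqP. Qed.

Lemma adjacent_edge e x y :
  x \in psi e -> y \in psi e -> x != y -> adjacent psi x y.
Proof.
by move=> xe ye xy; rewrite /adjacent xy; apply/existsP; exists e; rewrite xe.
Qed.

Lemma loopless_psi e x y : loopless psi ->
  x \in psi e -> y \in psi e -> x != y -> psi e = [set x; y].
Proof.
move=> ll xe ye xy; apply/esym/eqP; rewrite eqEcard cards2 xy ll leqnn andbT.
by apply/subsetP => z; rewrite !inE => /orP[]/eqP->.
Qed.

Variable H : {group {perm V} * {perm E}}.

Lemma vorbitP v w : reflect (exists2 h, h \in H & w = h.1 v) (w \in vorbit H v).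
Proof. exact: (iffP imsetP). Qed.

Lemma mem_vorbit h v : h \in H -> h.1 v \in vorbit H v.
Proof. by move=> hH; apply/vorbitP; exists h. Qed.

Lemma vorbit_refl v : v \in vorbit H v.
Proof. by apply/vorbitP; exists 1; rewrite ?group1 ?perm1. Qed.

Lemma vorbit_sym v w : w \in vorbit H v -> v \in vorbit H w.
Proof.
by case/vorbitP=> h hH ->; apply/vorbitP; exists h^-1; rewrite ?groupV //= permK.
Qed.

Lemma vorbit_trans v w x :
  w \in vorbit H v -> x \in vorbit H w -> x \in vorbit H v.
Proof.
case/vorbitP=> h hH ->; case/vorbitP=> h' h'H ->.
by apply/vorbitP; exists (h * h'); rewrite ?groupM //= permM.
Qed.

End Multigraphs.

Section PullbackPerm.
Variables (T U : finType) (f : T -> U) (r : U -> U).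
Hypotheses (f_inj : injective f) (r_inj : injective r).
Hypothesis r_im : forall x, r (f x) \in codom f.

Definition pullback x := iinv (r_im x).

Lemma pullbackE x : f (pullback x) = r (f x).
Proof. exact: f_iinv. Qed.

Lemma pullback_inj : injective pullback.
Proof. by move=> x y exy; apply/f_inj/r_inj; rewrite -!pullbackE exy. Qed.

Definition pullback_perm : {perm T} := perm pullback_inj.

Lemma pullback_permE x : f (pullback_perm x) = r (f x).
Proof. by rewrite permE pullbackE. Qed.

End PullbackPerm.

Section PhiGraph.
Variables (gT : finGroupType) (S : seq gT).
Local Notation s i := (nth 1 S i).

Definition rmulV a (w : 'I_(size S) * {set gT}) := (w.1, w.2 :* a).
Definition rmulE a (t : 'I_(size S) * 'I_(size S) * gT) := (t.1, t.2 * a).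

Lemma rmulV_inj a : injective (rmulV a).
Proof.
move=> [i X] [j Y]; rewrite /rmulV /= => -[-> eXY].
by rewrite -(rcosetK a X) eXY rcosetK.
Qed.

Lemma rmulE_inj a : injective (rmulE a).
Proof. by move=> [p x] [q y]; rewrite /rmulE /= => -[-> /mulIg ->]. Qed.

Lemma rmulV_Phi_V a w : w \in Phi_V S -> rmulV a w \in Phi_V S.
Proof.
rewrite !inE /= => /rcosetsP[x _ ->]; apply/rcosetsP.
by exists (x * a); rewrite ?in_setT ?rcosetM.
Qed.

Lemma rmulE_Phi_E a t : t \in Phi_E S -> rmulE a t \in Phi_E S.
Proof. by rewrite !inE. Qed.

Lemma Phi_psi_rmulE a t : Phi_psi (rmulE a t) = rmulV a @: Phi_psi t.
Proof.
by case: t => [[i j] x]; rewrite /Phi_psi imsetU1 imset_set1 /rmulV /= !rcosetM.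
Qed.

Lemma Phi_psi_fst_inj t w w' : t \in Phi_E S ->
  w \in Phi_psi t -> w' \in Phi_psi t -> w.1 = w'.1 -> w = w'.
Proof.
case: t => [[i j] z]; rewrite !inE /= => lt.
by case/orP=> /eqP-> /orP[]/eqP-> //= eij; move: lt; rewrite eij ltnn.
Qed.

Lemma Phi_psi_cycle (a k i j : 'I_(size S)) X z :
  (a, <[s a]>) \in Phi_psi (i, j, z) -> (k, X) \in Phi_psi (i, j, z) ->
  a != k -> (i < j)%N ->
  z \in <[s a]> /\ (i, j) = (if (a < k)%N then (a, k) else (k, a)).
Proof.
rewrite !inE !xpair_eqE /=.
case/orP=> /andP[/eqP ai /eqP ez] /orP[]/andP[/eqP kj _] ak lt; subst;
  rewrite ?eqxx // in ak; rewrite ez rcoset_refl; split=> //.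
- by rewrite lt.
- by rewrite ltnNge (ltnW lt).
Qed.

Lemma Phi_psi_cycles (i j : 'I_(size S)) : i != j ->
  exists2 t, t \in Phi_E S & Phi_psi t = [set (i, <[s i]>); (j, <[s j]>)].
Proof.
move=> ij; case: (ltngtP i j) => [lt|gt|eij]; last by rewrite (val_inj eij) eqxx in ij.
- by exists (i, j, 1); rewrite ?inE // /Phi_psi !rcoset1.
- by exists (j, i, 1); rewrite ?inE // /Phi_psi !rcoset1 setUC.
Qed.

End PhiGraph.

Definition G_graph_criterion (V E : finType) (psi : E -> {set V})
    (H : {group {perm V} * {perm E}}) (C : {set V}) : Prop :=
  H \subset Aut_mg psi /\ is_clique psi C /\
  [/\ (forall v, is_stable psi (vorbit H v)),
      (forall v, exists2 u, u \in C & u \in vorbit H v),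
      (forall u, u \in C -> cyclic (vstab H u)) &
      (forall u v, u \in C -> u \notin vorbit H v ->
         acts_regularly_E (vstab H u) (edges_to psi u (vorbit H v)))].

Section Forward.
Variables (V E : finType) (psi : E -> {set V}) (gT : finGroupType) (S : seq gT).
Variables (f : V -> 'I_(size S) * {set gT}) (g : E -> 'I_(size S) * 'I_(size S) * gT).
Hypotheses (f_inj : injective f) (f_im : f @: setT = Phi_V S).
Hypotheses (g_inj : injective g) (g_im : g @: setT = Phi_E S).
Hypothesis psi_g : forall e, Phi_psi (g e) = f @: psi e.
Local Notation s i := (nth 1 S i).

Lemma f_Phi_V v : f v \in Phi_V S.
Proof. by rewrite -f_im imset_f. Qed.

Lemma g_Phi_E e : g e \in Phi_E S.
Proof. by rewrite -g_im imset_f. Qed.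

Lemma rmulV_codom a v : rmulV a (f v) \in codom f.
Proof.
have /imsetP[u _ eu] : rmulV a (f v) \in f @: setT by rewrite f_im rmulV_Phi_V ?f_Phi_V.
by rewrite eu codom_f.
Qed.

Lemma rmulE_codom a e : rmulE a (g e) \in codom g.
Proof.
have /imsetP[u _ eu] : rmulE a (g e) \in g @: setT by rewrite g_im rmulE_Phi_E ?g_Phi_E.
by rewrite eu codom_f.
Qed.

Definition shiftV a : {perm V} := pullback_perm f_inj (@rmulV_inj _ S a) (rmulV_codom a).
Definition shiftE a : {perm E} := pullback_perm g_inj (@rmulE_inj _ S a) (rmulE_codom a).
Definition shift a := (shiftV a, shiftE a).

Lemma shiftVE a v : f (shiftV a v) = rmulV a (f v).
Proof. exact: pullback_permE. Qed.

Lemma shiftEE a e : g (shiftE a e) = rmulE a (g e).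
Proof. exact: pullback_permE. Qed.

Lemma shiftM : {in setT &, {morph shift : a b / a * b}}.
Proof.
move=> a b _ _; congr (_, _); apply/permP => x; rewrite permM.
  by apply: f_inj; rewrite !shiftVE /rmulV /= rcosetM.
by apply: g_inj; rewrite !shiftEE /rmulE /= mulgA.
Qed.

Canonical shift_morphism := Morphism shiftM.

Definition shiftG : {group {perm V} * {perm E}} := (shift @* setT)%G.

Lemma shiftGP h : reflect (exists a, h = shift a) (h \in shiftG).
Proof.
apply: (iffP idP) => [/morphimP[a _ _ ->]|[a ->]]; first by exists a.
by rewrite mem_morphim ?in_setT.
Qed.

Lemma shiftG_Aut : shiftG \subset Aut_mg psi.
Proof.
apply/subsetP => h /shiftGP[a ->]; rewrite inE; apply/forallP => e /=; apply/eqP.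
apply: (imset_inj f_inj); rewrite -psi_g shiftEE Phi_psi_rmulE psi_g -!imset_comp.
by apply: eq_imset => v /=; rewrite shiftVE.
Qed.

Lemma vorbit_shiftG_fst v w : w \in vorbit shiftG v -> (f w).1 = (f v).1.
Proof. by case/vorbitP=> _ /shiftGP[a ->] ->; rewrite shiftVE. Qed.

Lemma f_rcoset v : exists x, (f v).2 = <[s (f v).1]> :* x.
Proof. by have /[!inE] /rcosetsP[x _ ->] := f_Phi_V v; exists x. Qed.

Definition base_clique := [set v | 1 \in (f v).2].

Lemma base_cliqueE u : u \in base_clique -> (f u).2 = <[s (f u).1]>.
Proof.
rewrite inE; have [x ->] := f_rcoset u; rewrite mem_rcoset mul1g => xV.
by rewrite rcoset_id // -[x]invgK groupV.
Qed.

Lemma f_base_clique u : u \in base_clique -> f u = ((f u).1, <[s (f u).1]>).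
Proof. by move=> uC; rewrite -(base_cliqueE uC) -surjective_pairing. Qed.

Lemma vorbit_shiftG_stable v : is_stable psi (vorbit shiftG v).
Proof.
move=> x y xO yO; apply/negP => /andP[xy /existsP[e /andP[xe ye]]].
have fxy : f x = f y.
  apply: (Phi_psi_fst_inj (g_Phi_E e)); rewrite ?psi_g ?imset_f //.
  by rewrite (vorbit_shiftG_fst xO) (vorbit_shiftG_fst yO).
by move: xy; rewrite (f_inj fxy) eqxx.
Qed.

Lemma base_clique_clique : is_clique psi base_clique.
Proof.
move=> u w uC wC uw; have fuE := f_base_clique uC; have fwE := f_base_clique wC.
have ij : (f u).1 != (f w).1.
  by apply: contra uw => /eqP eij; apply/eqP/f_inj; rewrite fuE fwE eij.
have [t tPhi psi_t] := Phi_psi_cycles ij.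
have /imsetP[e _ get] : t \in g @: setT by rewrite g_im.
apply: (adjacent_edge (e := e)) uw; rewrite -(mem_imset _ _ f_inj) -psi_g -get psi_t.
- by rewrite fuE !inE eqxx.
- by rewrite fwE !inE eqxx orbT.
Qed.

Lemma base_clique_meets v : exists2 u, u \in base_clique & u \in vorbit shiftG v.
Proof.
have [x ex] := f_rcoset v; exists (shiftV x^-1 v).
  by rewrite inE shiftVE /rmulV /= ex rcosetK group1.
by apply: (mem_vorbit (h := shift x^-1)); apply/shiftGP; exists x^-1.
Qed.

Lemma vstab_shiftG u : u \in base_clique -> vstab shiftG u = shift @* <[s (f u).1]>.
Proof.
move=> uC; apply/setP => h; rewrite inE; apply/andP/idP.
  case=> /shiftGP[a ->] /eqP /(congr1 (fun v => (f v).2)).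
  rewrite shiftVE /= (base_cliqueE uC) => ea.
  by rewrite mem_morphim ?in_setT // -ea rcoset_refl.
case/morphimP=> a _ aS ->; split; first by apply/shiftGP; exists a.
by apply/eqP/f_inj; rewrite shiftVE /rmulV (base_cliqueE uC) rcoset_id // -f_base_clique.
Qed.

Lemma vstab_shiftG_cyclic u : u \in base_clique -> cyclic (vstab shiftG u).
Proof. by move=> uC; rewrite vstab_shiftG // morphim_cyclic ?cycle_cyclic. Qed.

Lemma base_clique_fst_vorbit u v :
  u \in base_clique -> u \notin vorbit shiftG v -> (f u).1 != (f v).1.
Proof.
move=> uC; apply: contra => /eqP eq; have [x ex] := f_rcoset v.
apply/vorbitP; exists (shift x^-1); first by apply/shiftGP; exists x^-1.
by apply: f_inj; rewrite shiftVE /rmulV /= ex rcosetK f_base_clique // eq.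
Qed.

Definition part_pair u v : 'I_(size S) * 'I_(size S) :=
  if ((f u).1 < (f v).1)%N then ((f u).1, (f v).1) else ((f v).1, (f u).1).

Lemma edges_to_label u v e : u \in base_clique -> u \notin vorbit shiftG v ->
  e \in edges_to psi u (vorbit shiftG v) ->
  (g e).1 = part_pair u v /\ (g e).2 \in <[s (f u).1]>.
Proof.
move=> uC uO; rewrite inE => /andP[ue /existsP[w /andP[/andP[wO _] we]]].
have fu : ((f u).1, <[s (f u).1]>) \in Phi_psi (g e).
  by rewrite -f_base_clique // psi_g imset_f.
have fw : ((f v).1, (f w).2) \in Phi_psi (g e).
  by rewrite -(vorbit_shiftG_fst wO) -surjective_pairing psi_g imset_f.
have := g_Phi_E e; rewrite inE; move: fu fw (base_clique_fst_vorbit uC uO).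
rewrite /part_pair; case: (g e) => [[i j] z] /= fu fw uv lt.
by have [-> ->] := Phi_psi_cycle fu fw uv lt.
Qed.

Lemma vstab_shiftG_regular u v : u \in base_clique -> u \notin vorbit shiftG v ->
  acts_regularly_E (vstab shiftG u) (edges_to psi u (vorbit shiftG v)).
Proof.
move=> uC uO x y xe ye.
have [gx1 zx] := edges_to_label uC uO xe; have [gy1 zy] := edges_to_label uC uO ye.
apply/eqP/cards1P; exists (shift ((g x).2^-1 * (g y).2)); apply/setP => h.
rewrite in_set1 inE vstab_shiftG //; apply/andP/eqP => [[]|->].
  case/morphimP=> a _ aS -> /eqP /(congr1 (fun e => (g e).2)).
  by rewrite shiftEE /= => <-; rewrite mulKg.
split; first by rewrite mem_morphim ?in_setT // groupM ?groupV.
apply/eqP/g_inj; rewrite shiftEE /rmulE mulKVg gx1 -gy1.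
by rewrite -surjective_pairing.
Qed.

Lemma shiftG_criterion : G_graph_criterion psi shiftG base_clique.
Proof.
split; first exact: shiftG_Aut.
split; first exact: base_clique_clique.
split; [exact: vorbit_shiftG_stable | exact: base_clique_meets |
        exact: vstab_shiftG_cyclic | exact: vstab_shiftG_regular].
Qed.

End Forward.

Lemma ord_pair_inj n (a b c d : 'I_n) : [set a; b] = [set c; d] ->
  (a < b)%N -> (c < d)%N -> a = c /\ b = d.
Proof.
move=> eab ab cd.
have ha : a \in [set c; d] by rewrite -eab !inE eqxx.
have hb : b \in [set c; d] by rewrite -eab !inE eqxx orbT.
have hc : c \in [set a; b] by rewrite eab !inE eqxx.
move: ha hb hc; rewrite !inE -!(inj_eq val_inj) /=.
by move=> /orP[]/eqP e1 /orP[]/eqP e2 /orP[]/eqP e3; split; apply: val_inj => /=; lia.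
Qed.

Lemma ltn_ord_neq n (i j : 'I_n) : (i < j)%N -> i != j.
Proof. by move=> lt; rewrite -(inj_eq val_inj) /= neq_ltn lt. Qed.

Section Backward.
Variables (V E : finType) (psi : E -> {set V}).
Variables (H : {group {perm V} * {perm E}}) (C : {set V}).
Hypotheses (psi_loopless : loopless psi) (H_Aut : H \subset Aut_mg psi).
Hypothesis C_clique : is_clique psi C.
Hypothesis vorbit_stable : forall v, is_stable psi (vorbit H v).
Hypothesis C_meets : forall v, exists2 u, u \in C & u \in vorbit H v.
Hypothesis vstab_cyclic : forall u, u \in C -> cyclic (vstab H u).
Hypothesis vstab_regular : forall u v, u \in C -> u \notin vorbit H v ->
  acts_regularly_E (vstab H u) (edges_to psi u (vorbit H v)).
(* Only a default for [nth]: an empty vertex set is handled by [G_graph_of_void]. *)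
Variable v0 : V.

Lemma psi_act h e : h \in H -> psi (h.2 e) = h.1 @: psi e.
Proof. by move=> hH; apply/Aut_mg_psi/(subsetP H_Aut). Qed.

Lemma C_vorbit_eq u w : u \in C -> w \in C -> w \in vorbit H u -> w = u.
Proof.
move=> uC wC wO; apply/eqP; apply: contraTT isT => wu.
have := vorbit_stable (vorbit_refl H u) wO.
by rewrite (C_clique uC wC) // eq_sym.
Qed.

Lemma rep_exists v : exists u, (u \in C) && (u \in vorbit H v).
Proof. by have [u uC uO] := C_meets v; exists u; rewrite uC. Qed.

Definition rep v := xchoose (rep_exists v).

Lemma repP v : rep v \in C /\ rep v \in vorbit H v.
Proof. exact/andP/(xchooseP (rep_exists v)). Qed.

Lemma rep_eq u v : u \in C -> u \in vorbit H v -> rep v = u.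
Proof.
move=> uC uO; have [rC rO] := repP v.
by apply: C_vorbit_eq => //; apply: vorbit_trans (vorbit_sym uO) rO.
Qed.

Definition gen c := odflt 1 [pick x | vstab H c == <[x]>].

Lemma genP c : c \in C -> vstab H c = <[gen c]>.
Proof.
rewrite /gen => cC; case: pickP => [x /eqP //|none].
by have /cyclicP[x ex] := vstab_cyclic cC; have := none x; rewrite ex eqxx.
Qed.

Lemma gen_in c : c \in C -> gen c \in H.
Proof. by move=> cC; have := cycle_id (gen c); rewrite -genP // inE => /andP[]. Qed.

Local Notation K := (subg_of H).
Definition kV (k : K) : {perm V} := (sgval k).1.
Definition kE (k : K) : {perm E} := (sgval k).2.

Lemma kVM k1 k2 : kV (k1 * k2) = kV k1 * kV k2. Proof. by []. Qed.
Lemma kVV k : kV k^-1 = (kV k)^-1. Proof. by []. Qed.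
Lemma kEM k1 k2 : kE (k1 * k2) = kE k1 * kE k2. Proof. by []. Qed.
Lemma kEV k : kE k^-1 = (kE k)^-1. Proof. by []. Qed.

Lemma psi_kE k e : psi (kE k e) = kV k @: psi e.
Proof. exact/psi_act/subgP. Qed.

Definition S : seq K := [seq subg H (gen c) | c <- enum C].
Local Notation s i := (nth 1 S i).

Definition cvert (i : nat) := nth v0 (enum C) i.

Lemma size_S : size S = #|C|.
Proof. by rewrite size_map cardE. Qed.

Lemma cvert_in (i : 'I_(size S)) : cvert i \in C.
Proof. by rewrite -mem_enum /cvert mem_nth // -cardE -size_S. Qed.

Lemma nth_S (i : 'I_(size S)) : s i = subg H (gen (cvert i)).
Proof. by rewrite /S (nth_map v0) // -cardE -size_S. Qed.

Lemma mem_cycle_S (i : 'I_(size S)) k : (k \in <[s i]>) = (kV k (cvert i) == cvert i).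
Proof.
have iC := cvert_in i; have genH := gen_in iC.
have -> : (kV k (cvert i) == cvert i) = (sgval k \in <[gen (cvert i)]>).
  by rewrite -genP // inE subgP.
rewrite nth_S; apply/cycleP/cycleP => [[m ->]|[m em]]; exists m.
  by rewrite morphX ?in_setT //= subgK.
by apply: subg_inj; rewrite morphX ?in_setT //= subgK.
Qed.

Lemma index_rep_lt v : (index (rep v) (enum C) < size S)%N.
Proof. by rewrite size_S cardE index_mem mem_enum; case: (repP v). Qed.

Definition idx v : 'I_(size S) := Ordinal (index_rep_lt v).

Lemma cvert_idx v : cvert (idx v) = rep v.
Proof. by rewrite /cvert /= nth_index // mem_enum; case: (repP v). Qed.

Lemma idx_cvert (i : 'I_(size S)) : idx (cvert i) = i.
Proof.
apply: val_inj => /=; rewrite (rep_eq (cvert_in i) (vorbit_refl H _)).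
by rewrite /cvert index_uniq ?enum_uniq // -cardE -size_S.
Qed.

Lemma eq_idx v w : (idx v == idx w) = (w \in vorbit H v).
Proof.
apply/eqP/idP => [e|wO].
  have : cvert (idx v) = cvert (idx w) by rewrite e.
  rewrite !cvert_idx => ec; have [_ rv] := repP v; have [_ rw] := repP w.
  by apply: vorbit_trans rv _; rewrite ec; apply: vorbit_sym.
apply: val_inj => /=; congr index; have [rC rO] := repP v.
by apply/esym/rep_eq => //; apply: vorbit_trans (vorbit_sym wO) rO.
Qed.

Lemma idx_act h v : h \in H -> idx (h.1 v) = idx v.
Proof. by move=> hH; apply/esym/eqP; rewrite eq_idx mem_vorbit. Qed.

Lemma idx_kV k v : idx (kV k v) = idx v.
Proof. exact/idx_act/subgP. Qed.

Definition vcoset v := [set k : K | kV k (cvert (idx v)) == v].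
Definition vmap v := (idx v, vcoset v).

Lemma vcoset_rcoset v k0 : kV k0 (cvert (idx v)) = v -> vcoset v = <[s (idx v)]> :* k0.
Proof.
move=> e0; apply/setP => k; rewrite inE mem_rcoset mem_cycle_S kVM kVV permM.
by rewrite (canF_eq (permKV _)) e0.
Qed.

Lemma vertex_kV v : exists k, kV k (cvert (idx v)) = v.
Proof.
rewrite cvert_idx; have [_ /vorbit_sym/vorbitP[h hH ev]] := repP v.
by exists (subg H h); rewrite /kV subgK // -ev.
Qed.

Lemma vmap_kV (i : 'I_(size S)) k : vmap (kV k (cvert i)) = (i, <[s i]> :* k).
Proof.
have ei : idx (kV k (cvert i)) = i by rewrite idx_kV idx_cvert.
by rewrite /vmap (@vcoset_rcoset _ k) ei.
Qed.

Lemma vmap_inj : injective vmap.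
Proof.
move=> v w e; have ei : idx v = idx w := congr1 fst e.
have es : vcoset v = vcoset w := congr1 snd e; have [k ek] := vertex_kV v.
have : k \in vcoset v by rewrite inE ek.
by rewrite es inE -ei ek => /eqP.
Qed.

Lemma vmap_im : vmap @: setT = Phi_V S.
Proof.
apply/setP => -[i X]; rewrite inE /=; apply/imsetP/rcosetsP.
  case=> v _ [-> ->]; have [k ek] := vertex_kV v.
  by exists k; rewrite ?in_setT // (vcoset_rcoset ek).
by case=> k _ ->; exists (kV k (cvert i)); rewrite ?in_setT ?vmap_kV.
Qed.

Lemma edge_idx_neq e x y : x \in psi e -> y \in psi e -> x != y -> idx x != idx y.
Proof.
move=> xe ye xy; rewrite eq_idx; apply: contraL (adjacent_edge xe ye xy) => yO.
exact: vorbit_stable (vorbit_refl H x) yO.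
Qed.

Lemma cvert_neq (i j : 'I_(size S)) : i != j -> cvert i != cvert j.
Proof. by apply: contra => /eqP e; rewrite -(idx_cvert i) e idx_cvert. Qed.

Lemma cvert_notin_vorbit (i j : 'I_(size S)) :
  i != j -> cvert i \notin vorbit H (cvert j).
Proof. by rewrite -eq_idx !idx_cvert eq_sym. Qed.

Definition clique_edge (i j : 'I_(size S)) : option E :=
  [pick e | (cvert i \in psi e) && (cvert j \in psi e)].

Lemma clique_edgeP (i j : 'I_(size S)) : i != j ->
  exists2 e, clique_edge i j = Some e & psi e = [set cvert i; cvert j].
Proof.
move=> ij; rewrite /clique_edge; case: pickP => [e /andP[ie je]|none].
  by exists e; rewrite // (loopless_psi psi_loopless ie je) // cvert_neq.
have /andP[_ /existsP[e]] := C_clique (cvert_in i) (cvert_in j) (cvert_neq ij).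
by rewrite none.
Qed.

Lemma clique_edge_to (i j : 'I_(size S)) e : i != j -> psi e = [set cvert i; cvert j] ->
  e \in edges_to psi (cvert i) (vorbit H (cvert j)).
Proof.
move=> ij psi_e; rewrite inE psi_e !inE eqxx /=; apply/existsP; exists (cvert j).
by rewrite vorbit_refl eq_sym cvert_neq // !inE eqxx orbT.
Qed.

Lemma edge_kE (i j : 'I_(size S)) e0 e x y :
  i != j -> psi e0 = [set cvert i; cvert j] ->
  x \in psi e -> y \in psi e -> idx x = i -> idx y = j -> exists k, kE k e0 = e.
Proof.
move=> ij psi_e0 xe ye ix iy.
have /vorbitP[h hH ehx] : cvert i \in vorbit H x by rewrite -eq_idx idx_cvert ix.
have he_to : h.2 e \in edges_to psi (cvert i) (vorbit H (cvert j)).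
  rewrite inE psi_act // ehx imset_f //=; apply/existsP; exists (h.1 y).
  rewrite imset_f // andbT -eq_idx idx_cvert idx_act // iy eqxx /=.
  by apply: contra ij => /eqP hy; rewrite -ix -iy -(idx_act x hH) -hy idx_act.
have := vstab_regular (cvert_in i) (cvert_notin_vorbit ij)
  (clique_edge_to ij psi_e0) he_to.
move/eqP/cards1P=> [h' eh'].
have : h' \in [set h0 in vstab H (cvert i) | h0.2 e0 == h.2 e] by rewrite eh' set11.
rewrite !inE => /andP[/andP[h'H _] /eqP eh'e].
by exists (subg H (h' * h^-1)); rewrite /kE subgK ?groupM ?groupV //= permM eh'e permK.
Qed.

Lemma kE_inj_at (i j : 'I_(size S)) e0 k1 k2 : i != j ->
  psi e0 = [set cvert i; cvert j] -> kE k1 e0 = kE k2 e0 -> k1 = k2.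
Proof.
move=> ij psi_e0 e12; pose k := k1 * k2^-1.
have ke : kE k e0 = e0 by rewrite kEM kEV permM e12 permK.
have kfix : kV k (cvert i) = cvert i.
  have : kV k (cvert i) \in psi e0 by rewrite -ke psi_kE imset_f // psi_e0 !inE eqxx.
  rewrite psi_e0 !inE => /orP[/eqP // | /eqP kij].
  by move: ij; rewrite -(idx_cvert i) -(idx_kV k) kij !idx_cvert eqxx.
have := vstab_regular (cvert_in i) (cvert_notin_vorbit ij)
  (clique_edge_to ij psi_e0) (clique_edge_to ij psi_e0).
move/eqP/cards1P=> [a ea].
have k_in : sgval k \in [set h in vstab H (cvert i) | h.2 e0 == e0].
  by rewrite !inE subgP kfix ke !eqxx.
have one_in : 1 \in [set h in vstab H (cvert i) | h.2 e0 == e0].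
  by rewrite !inE group1 !perm1 !eqxx.
rewrite ea !inE in k_in one_in.
apply/eqP; rewrite eq_mulgV1 -/k; apply/eqP/subg_inj.
by rewrite (eqP k_in) -(eqP one_in).
Qed.

Definition is_label e (t : 'I_(size S) * 'I_(size S) * K) :=
  (t.1.1 < t.1.2)%N && (omap (kE t.2) (clique_edge t.1.1 t.1.2) == Some e).

Lemma label_exists e : exists t, is_label e t.
Proof.
have /cards2P[x [y [xy psi_e]]] : #|psi e| == 2 by rewrite psi_loopless.
have xe : x \in psi e by rewrite psi_e !inE eqxx.
have ye : y \in psi e by rewrite psi_e !inE eqxx orbT.
wlog lt : x y xy xe ye {psi_e} / (idx x < idx y)%N.
  move=> wl; case: (ltngtP (idx x) (idx y)) => [|gt|eq]; first exact: wl.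
    by apply: (wl y x) => //; rewrite eq_sym.
  by have := edge_idx_neq xe ye xy; rewrite (val_inj eq) eqxx.
have [e0 ce0 psi_e0] := clique_edgeP (ltn_ord_neq lt).
have [k ek] := edge_kE (ltn_ord_neq lt) psi_e0 xe ye erefl erefl.
by exists (idx x, idx y, k); rewrite /is_label /= lt ce0 /= ek.
Qed.

Lemma is_label_psi e i j k : is_label e (i, j, k) ->
  psi e = [set kV k (cvert i); kV k (cvert j)].
Proof.
case/andP=> /= lt; have [e0 -> psi_e0] := clique_edgeP (ltn_ord_neq lt).
by move=> /eqP[<-]; rewrite psi_kE psi_e0 imsetU1 imset_set1.
Qed.

Lemma is_label_idx e i j k : is_label e (i, j, k) -> idx @: psi e = [set i; j].
Proof. by move/is_label_psi->; rewrite imsetU1 imset_set1 !idx_kV !idx_cvert. Qed.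

Lemma is_label_uniq e t t' : is_label e t -> is_label e t' -> t = t'.
Proof.
case: t t' => [[i j] k] [[i' j'] k'] l l'.
have [lt lt'] : (i < j)%N /\ (i' < j')%N by case/andP: l; case/andP: l'.
have [ei ej] := ord_pair_inj (etrans (esym (is_label_idx l)) (is_label_idx l')) lt lt'.
subst i' j'.
have [e0 ce0 psi_e0] := clique_edgeP (ltn_ord_neq lt).
move: l l'; rewrite /is_label /= ce0 /= => /andP[_ /eqP[ke]] /andP[_ /eqP[ke']].
by rewrite (kE_inj_at (ltn_ord_neq lt) psi_e0 (etrans ke (esym ke'))).
Qed.

Definition emap e := xchoose (label_exists e).

Lemma emapP e : is_label e (emap e).
Proof. exact: xchooseP. Qed.

Lemma emap_inj : injective emap.
Proof.
move=> e e' ee; have := emapP e'; rewrite -ee => /andP[_ /eqP].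
by case/andP: (emapP e) => _ /eqP -> [].
Qed.

Lemma emap_im : emap @: setT = Phi_E S.
Proof.
apply/setP => -[[i j] k]; rewrite inE /=; apply/imsetP/idP => [[e _ eij]|lt].
  by have /andP[] := emapP e; rewrite -eij.
have [e0 ce0 _] := clique_edgeP (ltn_ord_neq lt).
exists (kE k e0); rewrite ?in_setT //; apply/esym/(is_label_uniq (emapP _)).
by rewrite /is_label /= lt ce0 /= eqxx.
Qed.

Lemma Phi_psi_emap e : Phi_psi (emap e) = vmap @: psi e.
Proof.
case: (emap e) (emapP e) => [[i j] k] l.
by rewrite (is_label_psi l) imsetU1 imset_set1 !vmap_kV.
Qed.

Lemma G_graph_of_criterion : is_G_graph psi.
Proof.
exists K, S, vmap, emap; split.
- exact: vmap_inj.
- exact: vmap_im.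
- exact: emap_inj.
- exact: emap_im.
- exact: Phi_psi_emap.
Qed.

End Backward.

Lemma G_graph_of_void (V E : finType) (psi : E -> {set V}) :
  loopless psi -> (V -> False) -> is_G_graph psi.
Proof.
move=> ll noV; have noE : E -> False.
  move=> e; have := ll e; rewrite (_ : psi e = set0) ?cards0 //.
  by apply/setP => x; case: (noV x).
exists {perm V}, [::].
exists (fun v => False_rect _ (noV v)), (fun e => False_rect _ (noE e)); split.
- by move=> x; case: (noV x).
- by apply/setP => -[[i ?] ?].
- by move=> x; case: (noE x).
- by apply/setP => -[[[i ?] ?] ?].
- by move=> e; case: (noE e).
Qed.

Theorem corollary2 (V E : finType) (psi : E -> {set V}) :
  loopless psi ->
  (is_G_graph psi <->
   exists (H : {group {perm V} * {perm E}}) (C : {set V}),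
     H \subset Aut_mg psi /\ is_clique psi C /\
     [/\ (forall v, is_stable psi (vorbit H v)),
         (forall v, exists2 u, u \in C & u \in vorbit H v),
         (forall u, u \in C -> cyclic (vstab H u)) &
         (forall u v, u \in C -> u \notin vorbit H v ->
            acts_regularly_E (vstab H u) (edges_to psi u (vorbit H v)))]).
Proof.
move=> ll; split.
  case=> gT [S [f [g [f_inj f_im g_inj g_im psi_g]]]].
  exists (shiftG f_inj f_im g_inj g_im), (base_clique f).
  exact: shiftG_criterion psi_g.
case=> H [C [H_Aut [C_clique [stable meets cyclic regular]]]].
have [v0 _ | noV] := pickP (fun _ : V => true).
  exact: G_graph_of_criterion ll H_Aut C_clique stable meets cyclic regular v0.
by apply: G_graph_of_void ll _ => v; have := noV v.
Qed.
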